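(* Let $X_1,X_2$ be independent random variables on $S^1$, each centered at $P=(1,0)$. Then $$V(X_1+X_2)=V(X_1)+V(X_2)-\frac{V(X_1)V(X_2)}{2}.$$
   Context: A random variable $X$ on $S^1=\{x\in\mathbb{R}^2:\|x\|=1\}$ is given by a density of its angle $\Theta\in[-\pi,\pi)$, with $X=(\cos\Theta,\sin\Theta)$. $X$ is centered at $P=(1,0)$ if its mean value lies in the direction of $P$, i.e. $E[\sin\Theta]=0$. The variance is $V(X)=E[\|X-P\|^2]=E[2-2\cos\Theta]$. For independent $X_1,X_2$ with angles $\Theta_1,\Theta_2$, the sum $X_1+X_2$ is the point with angle $\Theta_1+\Theta_2$ (mod $2\pi$), i.e. its angle has density $f(\theta)=\int_{-\pi}^{\pi}f_1(\theta')f_2(\theta-\theta')\,d\theta'$. *)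

(* densities on [-pi, pi[ w.r.t. Lebesgue measure. *)
From HB Require Import structures.
From mathcomp Require Import all_boot all_order all_algebra.
From mathcomp Require Import all_classical all_reals all_analysis.
Set Implicit Arguments. Unset Strict Implicit. Unset Printing Implicit Defensive.
Import Order.TTheory GRing.Theory Num.Theory.
Local Open Scope classical_set_scope.
Local Open Scope ring_scope.

Section S1.
Variable R : realType.

Definition angle_dom : set R := `[- pi, pi[%classic.

Definition wrap (x : R) : R :=
  x - 2 * pi * (Num.floor ((x + pi) / (2 * pi)))%:~R.

Definition is_angle_density (f : R -> R) : Prop :=
  [/\ measurable_fun angle_dom f,
      (forall x, angle_dom x -> 0 <= f x) &
      (\int[lebesgue_measure]_(x in angle_dom) (f x)%:E = 1)%E].

Definition angle_expect (f : R -> R) (g : R -> R) : R :=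
  Rintegral lebesgue_measure angle_dom (fun t => g t * f t).

(* X = (cos Theta, sin Theta) is centered_at_P at P = (1,0): E[sin Theta] = 0 *)
Definition centered_at_P (f : R -> R) : Prop := angle_expect f sin = 0.

(* V(X) = E[||X - P||^2] = E[2 - 2 cos Theta] *)
Definition circ_variance (f : R -> R) : R :=
  angle_expect f (fun t => 2 - 2 * cos t).

(* density of the angle of X1 + X2 (angles added mod 2 pi) *)
Definition circ_conv (f1 f2 : R -> R) (th : R) : R :=
  Rintegral lebesgue_measure angle_dom (fun t => f1 t * f2 (wrap (th - t))).

End S1.

(* Since V = 2 - 2 E[cos Θ], the identity amounts to
   E[cos (Θ1 + Θ2)] = E[cos Θ1] E[cos Θ2].  Tonelli's theorem and the rotation
   invariance of Lebesgue measure on [-pi, pi[ give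
   E[h (Θ1 + Θ2)] = E_t [E[h (Θ2 + t)]] (t distributed as Θ1) for every
   bounded, nonnegative, 2pi-periodic h.  For h = 2 - 2 cos, expanding
   cos (s + t) = cos s cos t - sin s sin t and using E[sin Θ2] = 0 yields the
   product formula. *)

From Pilot Require Import Defs.
From mathcomp Require Import all_boot all_order all_algebra.
From mathcomp Require Import all_classical all_reals all_analysis.
From mathcomp Require Import measurable_realfun lra ring.
Set Implicit Arguments. Unset Strict Implicit. Unset Printing Implicit Defensive.
Import Order.TTheory GRing.Theory Num.Theory numFieldTopology.Exports.
Local Open Scope classical_set_scope.
Local Open Scope ring_scope.

Section lebesgue_translation.
Context {R : realType}.
Local Notation mu := (@lebesgue_measure R).

Let measurable_shift (c : R) : measurable_fun setT (fun x : R => x + c).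
Proof. exact: measurable_funD. Qed.

(* A pushforward is a measure only under a measurability proof of the map,
   which type inference cannot find: the instance is built by hand. *)
Let shifted_lebesgue (c : R) : measure (measurableTypeR R) R.
Proof.
unshelve refine (@pushforward _ _ (measurableTypeR R) (measurableTypeR R) R mu
  (fun x => x + c) : measure _ R); exact: measurable_shift.
Defined.

Lemma lebesgue_measure_shift (c : R) (A : set R) : measurable A ->
  pushforward mu (fun x => x + c) A = mu A.
Proof.
move=> mA; apply/esym/(@lebesgue_measure_unique R (shifted_lebesgue c)) => //.
move=> _ [[a b] _ <-] /=; rewrite /pushforward.
have -> : (fun x => x + c) @^-1` `]a, b] = `]a - c, b - c]%classic.
  by apply/seteqP; split => x /=; rewrite !in_itv /= => /andP[? ?];
    apply/andP; split; lra.
rewrite !lebesgue_measure_itv /= !lte_fin ltrD2r; case: ifP => // _.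
by rewrite -!EFinB; congr (_%:E); lra.
Qed.

Lemma ge0_integral_shift (c : R) (K : R -> \bar R) :
  measurable_fun setT K -> (forall x, 0 <= K x)%E ->
  (\int[mu]_x K (x + c)%R = \int[mu]_x K x)%E.
Proof.
move=> mK K0.
rewrite [RHS](eq_measure_integral (shifted_lebesgue c)) => [|A mA _]; last first.
  exact/esym/lebesgue_measure_shift.
by rewrite /shifted_lebesgue /= ge0_integral_pushforward //; exact: measurable_shift.
Qed.

Lemma ge0_integral_itv_shift (G : R -> \bar R) (a b c : R) :
  measurable_fun setT G -> (forall x, 0 <= G x)%E ->
  (\int[mu]_(x in `[(a + c)%R, (b + c)%R[) G (x - c)%R = \int[mu]_(x in `[a, b[) G x)%E.
Proof.
move=> mG G0; rewrite integral_mkcond [RHS]integral_mkcond.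
have mGab : measurable_fun setT (G \_ `[a, b[).
  by apply/(measurable_restrictT G (measurable_itv _)); exact: measurable_funTS.
rewrite -(@ge0_integral_shift (- c) _ mGab); last exact: erestrict_ge0.
apply: eq_integral => x _; rewrite /patch.
suff -> : (x - c \in `[a, b[%classic) = (x \in `[a + c, b + c[%classic) by [].
by apply/idP/idP; rewrite !inE /= !in_itv /= => /andP[? ?]; apply/andP; split; lra.
Qed.

Lemma ge0_integral_itv_co_split (G : R -> \bar R) (a b c : R) :
  measurable_fun setT G -> (forall x, 0 <= G x)%E -> a <= b -> b <= c ->
  (\int[mu]_(x in `[a, c[) G x =
   \int[mu]_(x in `[a, b[) G x + \int[mu]_(x in `[b, c[) G x)%E.
Proof.
move=> mG G0 ab bc.
rewrite (@itv_bndbnd_setU _ _ _ (BLeft b)) ?bnd_simp //.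
apply: ge0_integral_setU; [exact: measurable_itv | exact: measurable_itv |
  exact: measurable_funTS | by [] |].
by apply/disj_setPS => x [] /=; rewrite !in_itv /= => /andP[_ ?] /andP[? _]; lra.
Qed.

Lemma ge0_integral_periodic (T a b : R) (G : R -> \bar R) :
  measurable_fun setT G -> (forall x, 0 <= G x)%E ->
  (forall x, G (x + T) = G x) -> b - T <= a <= b + T ->
  (\int[mu]_(x in `[a, (a + T)%R[) G x = \int[mu]_(x in `[b, (b + T)%R[) G x)%E.
Proof.
move=> mG G0 GT /andP[aT Ta].
have itv_split x y z := @ge0_integral_itv_co_split G x y z mG G0.
case: (leP b a) => ba.
- rewrite (itv_split a (b + T)); [|lra|lra]; rewrite [RHS](itv_split b a); [|lra|lra].
  rewrite addeC; congr (_ + _)%E.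
  rewrite -(@ge0_integral_itv_shift G _ _ (- T)) // !addrK.
  by apply: eq_integral => x _; rewrite opprK GT.
- rewrite (itv_split a b); [|lra|lra]; rewrite [RHS](itv_split b (a + T)); [|lra|lra].
  rewrite addeC; congr (_ + _)%E.
  rewrite -(@ge0_integral_itv_shift G _ _ T) //.
  by apply: eq_integral => x _; rewrite -(GT (x - T)) subrK.
Qed.

End lebesgue_translation.

Section wrap.
Context {R : realType}.
Local Notation D := (@angle_dom R).
Local Notation mu := (@lebesgue_measure R).

Lemma measurable_angle_dom : measurable D.
Proof. exact: measurable_itv. Qed.

Lemma angle_domP (x : R) : D x <-> - pi <= x < pi.
Proof. by rewrite /angle_dom /= in_itv. Qed.

Let pi2_gt0 : 0 < 2 * pi :> R.
Proof. by rewrite mulr_gt0 // pi_gt0. Qed.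

Lemma angle_dom_wrap (x : R) : D (Defs.wrap x).
Proof.
apply/angle_domP; rewrite /Defs.wrap.
have := floor_itv ((x + pi) / (2 * pi)); rewrite intrD => /andP[lb ub].
rewrite ler_pdivlMr // in lb; rewrite ltr_pdivrMr // in ub.
by apply/andP; split; lra.
Qed.

Lemma wrap_id (x : R) : D x -> Defs.wrap x = x.
Proof.
move=> /angle_domP /andP[lb ub]; rewrite /Defs.wrap.
suff -> : Num.floor ((x + pi) / (2 * pi)) = 0 by rewrite mulr0z mulr0 subr0.
apply: floor_def; rewrite add0r; apply/andP; split.
  by rewrite divr_ge0 //; lra.
by rewrite ltr_pdivrMr //; lra.
Qed.

Lemma wrapD2pi (x : R) : Defs.wrap (x + 2 * pi) = Defs.wrap x.
Proof.
rewrite /Defs.wrap.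
have -> : (x + 2 * pi + pi) / (2 * pi) = (x + pi) / (2 * pi) + 1.
  by rewrite [x + _ + _]addrAC mulrDl divff ?gt_eqF.
by rewrite floorDrz ?int_num1 // floor1 intrD; ring.
Qed.

Lemma measurable_wrap : measurable_fun setT (@Defs.wrap R).
Proof.
apply: measurable_funB => //; apply: measurable_funM => //.
apply: (measurableT_comp (f := fun y : R => (Num.floor y)%:~R : R)).
  by apply: nondecreasing_measurable => // u v uv; rewrite ler_int le_floor.
by apply: measurable_funM => //; exact: measurable_funD.
Qed.

Lemma ge0_integral_angle_dom_rotate (h g : R -> R) (t : R) :
  measurable_fun setT h -> measurable_fun setT g ->
  (forall x, 0 <= h x) -> (forall x, 0 <= g x) ->
  (forall x, h (x + 2 * pi) = h x) -> D t ->
  (\int[mu]_(th in D) (h th * g (Defs.wrap (th - t)))%:E =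
   \int[mu]_(s in D) (h (s + t) * g s)%:E)%E.
Proof.
move=> mh mg h0 g0 hper /angle_domP /andP[t1 t2].
pose G u := (h (u + t) * g (Defs.wrap u))%:E.
have mG : measurable_fun setT G.
  apply/measurable_EFinP/measurable_funM.
    by apply: measurableT_comp mh _; exact: measurable_funD.
  exact: measurableT_comp mg measurable_wrap.
have G0 u : (0 <= G u)%E by rewrite lee_fin mulr_ge0.
have Gper u : G (u + 2 * pi) = G u by rewrite /G wrapD2pi addrAC hper.
have p0 := pi_gt0 R.
transitivity (\int[mu]_(th in `[(- pi - t + t)%R, (pi - t + t)%R[) G (th - t)%R)%E.
  by rewrite !subrK; apply: eq_integral => th _; rewrite /G subrK.
rewrite ge0_integral_itv_shift //.
have -> : pi - t = (- pi - t) + 2 * pi :> R by lra.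
rewrite (@ge0_integral_periodic _ _ _ (- pi)) //; last by apply/andP; split; lra.
have -> : - pi + 2 * pi = pi :> R by lra.
by apply: eq_integral => s /set_mem Ds; rewrite /G wrap_id.
Qed.

End wrap.

Section angle_density.
Context {R : realType}.
Variable f : R -> R.
Hypothesis hf : is_angle_density f.
Local Notation D := (@angle_dom R).
Local Notation mu := (@lebesgue_measure R).

Lemma measurable_angle_density : measurable_fun D f.
Proof. by case: hf. Qed.

Lemma angle_density_ge0 x : D x -> 0 <= f x.
Proof. by case: hf => _ + _; exact. Qed.

Lemma integral_angle_density : (\int[mu]_(x in D) (f x)%:E = 1)%E.
Proof. by case: hf. Qed.

Lemma angle_density_integrable : mu.-integrable D (EFin \o f).
Proof.
apply/integrableP; split.
  by apply/measurable_EFinP; exact: measurable_angle_density.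
have -> : (\int[mu]_(x in D) `|(EFin \o f) x|)%E = (\int[mu]_(x in D) (f x)%:E)%E.
  by apply: eq_integral => x /set_mem Dx; rewrite /= ger0_norm // angle_density_ge0.
by rewrite integral_angle_density ltry.
Qed.

Lemma angle_density_integrableMl (g : R -> R) (B : R) :
  measurable_fun D g -> (forall x, `|g x| <= B) ->
  mu.-integrable D (EFin \o (fun x => g x * f x)).
Proof.
move=> mg gB.
have bg : [bounded g x | x in D].
  exists B; split; first exact: num_real.
  by move=> r Br x _; exact: le_trans (gB x) (ltW Br).
have := integrableMr (mu := mu) measurable_angle_dom mg bg angle_density_integrable.
by apply: eq_integrable => [|x _ /=]; [exact: measurable_angle_dom | rewrite EFinM].
Qed.

Lemma angle_expect_trig (a b c : R) :
  angle_expect f (fun t => a + b * cos t + c * sin t) =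
  a + b * angle_expect f cos + c * angle_expect f sin.
Proof.
have mD := @measurable_angle_dom R.
have iZ k (g : R -> R) : mu.-integrable D (EFin \o g) ->
    mu.-integrable D (EFin \o (fun x => k * g x)).
  by move=> ig; apply: eq_integrable (integrableZl (mu := mu) mD k ig) => // x _;
    rewrite /= EFinM.
have iD (g1 g2 : R -> R) :
    mu.-integrable D (EFin \o g1) -> mu.-integrable D (EFin \o g2) ->
    mu.-integrable D (EFin \o (fun x => g1 x + g2 x)).
  by move=> i1 i2; apply: eq_integrable (integrableD (mu := mu) mD i1 i2) => // x _;
    rewrite /= EFinD.
have icos := angle_density_integrableMl
  (measurable_funTS (continuous_measurable_fun (@continuous_cos R))) (@cos_max R).
have isin := angle_density_integrableMl
  (measurable_funTS (continuous_measurable_fun (@continuous_sin R))) (@sin_max R).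
have i1 := angle_density_integrable.
rewrite /angle_expect.
under eq_Rintegral do rewrite !mulrDl -!mulrA.
rewrite !RintegralD ?RintegralZl //; try by [apply: iZ | apply: iD; apply: iZ].
by rewrite /Rintegral integral_angle_density mulr1.
Qed.

Lemma circ_variance_cos : circ_variance f = 2 - 2 * angle_expect f cos.
Proof.
rewrite -mulNr -[RHS]addr0 -(mul0r (angle_expect f sin)) -angle_expect_trig.
by apply: eq_Rintegral => t _; congr (_ * _); ring.
Qed.

Lemma angle_expect_variance_shift (t : R) :
  angle_expect f (fun s => 2 - 2 * cos (s + t)) =
  2 - 2 * (cos t * angle_expect f cos - sin t * angle_expect f sin).
Proof.
have -> : 2 - 2 * (cos t * angle_expect f cos - sin t * angle_expect f sin) =
    2 + (- 2 * cos t) * angle_expect f cos + (2 * sin t) * angle_expect f sin.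
  by ring.
rewrite -angle_expect_trig.
by apply: eq_Rintegral => s _; rewrite cosD; congr (_ * _); ring.
Qed.

End angle_density.

Section circ_conv.
Context {R : realType}.
Variables f1 f2 : R -> R.
Hypotheses (hf1 : is_angle_density f1) (hf2 : is_angle_density f2).
Local Notation D := (@angle_dom R).
Local Notation mu := (@lebesgue_measure R).

Definition circ_econv (th : R) : \bar R :=
  (\int[mu]_(t in D) (f1 t * f2 (Defs.wrap (th - t)))%:E)%E.

(* Restricting [f1] and [f2] to [D] makes the kernel measurable on all of [R * R]. *)
Definition conv_kernel (p : R * R) : R :=
  (f1 \_ D) p.2 * (f2 \_ D) (Defs.wrap (p.1 - p.2)).

Let measurable_restrict_density f : is_angle_density f ->
  measurable_fun setT (f \_ D).
Proof.
move=> hf; apply/(measurable_restrictT _ measurable_angle_dom).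
exact: measurable_angle_density.
Qed.

Let restrict_density_ge0 f : is_angle_density f -> forall x, 0 <= (f \_ D) x.
Proof. by move=> hf; apply: restrict_ge0; exact: angle_density_ge0. Qed.

Lemma measurable_conv_kernel : measurable_fun setT conv_kernel.
Proof.
apply: measurable_funM.
  exact: measurableT_comp (measurable_restrict_density hf1) measurable_snd.
apply: measurableT_comp (measurable_restrict_density hf2) _.
apply: measurableT_comp measurable_wrap _.
by apply: measurable_funB; [exact: measurable_fst | exact: measurable_snd].
Qed.

Lemma conv_kernel_ge0 p : 0 <= conv_kernel p.
Proof. by rewrite mulr_ge0 ?restrict_density_ge0. Qed.

Lemma circ_econvE th : circ_econv th = (\int[mu]_t (conv_kernel (th, t))%:E)%E.
Proof.
rewrite /circ_econv integral_mkcond; apply: eq_integral => t _.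
rewrite /conv_kernel /patch /=; case: ifPn => _; last by rewrite mul0r.
by rewrite (mem_set (angle_dom_wrap _)).
Qed.

Lemma measurable_circ_econv : measurable_fun setT circ_econv.
Proof.
have -> : circ_econv = (fun th => \int[mu]_t (conv_kernel (th, t))%:E)%E.
  by apply/funext => th; exact: circ_econvE.
apply: (measurable_fun_fubini_tonelli_F (m2 := mu) (EFin \o conv_kernel)).
  by apply/measurable_EFinP; exact: measurable_conv_kernel.
by move=> p; rewrite /= lee_fin conv_kernel_ge0.
Qed.

Lemma circ_econv_ge0 th : (0 <= circ_econv th)%E.
Proof.
by rewrite circ_econvE; apply: integral_ge0 => t _; rewrite lee_fin conv_kernel_ge0.
Qed.

Section periodic_test_function.
Variable h : R -> R.
Hypotheses (mh : measurable_fun setT h) (h0 : forall x, 0 <= h x)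
  (hper : forall x, h (x + 2 * pi) = h x).

Let mhD : measurable_fun setT (h \_ D).
Proof. exact/(measurable_restrictT _ measurable_angle_dom)/measurable_funTS. Qed.

Let restrict_h_ge0 x : 0 <= (h \_ D) x.
Proof. by apply: restrict_ge0 => y _; exact: h0. Qed.

Lemma integral_conv_kernel_section t :
  (\int[mu]_th ((h \_ D) th * conv_kernel (th, t))%:E =
   ((f1 \_ D) t)%:E * \int[mu]_(s in D) (h (s + t) * f2 s)%:E)%E.
Proof.
have mf2 := measurable_restrict_density hf2.
under eq_integral do rewrite /conv_kernel /= mulrCA EFinM.
rewrite ge0_integralZl_EFin ?restrict_density_ge0 //; last 2 first.
- by move=> th _; rewrite lee_fin mulr_ge0 ?restrict_h_ge0 ?restrict_density_ge0.
- apply/measurable_EFinP; apply: measurable_funM => //.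
  apply: measurableT_comp mf2 _; apply: measurableT_comp measurable_wrap _.
  exact: measurable_funB.
have [Dt|nDt] := boolP (t \in D); last by rewrite patchN ?mul0e.
rewrite patchT //; congr (_ * _)%E.
transitivity (\int[mu]_(th in D) (h th * (f2 \_ D) (Defs.wrap (th - t)))%:E)%E.
  rewrite [RHS]integral_mkcond; apply: eq_integral => th _.
  by rewrite !patchE; case: ifPn => // _; rewrite mul0r.
rewrite ge0_integral_angle_dom_rotate //; last 2 first.
- exact: restrict_density_ge0.
- exact: set_mem.
by apply: eq_integral => s Ds; rewrite patchT.
Qed.

Lemma integral_circ_econv :
  (\int[mu]_(th in D) ((h th)%:E * circ_econv th) =
   \int[mu]_(t in D) ((f1 t)%:E * \int[mu]_(s in D) (h (s + t) * f2 s)%:E))%E.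
Proof.
pose k (p : R * R) := ((h \_ D) p.1 * conv_kernel p)%:E.
have mk : measurable_fun setT k.
  apply/measurable_EFinP; apply: measurable_funM; last exact: measurable_conv_kernel.
  exact: measurableT_comp mhD measurable_fst.
have k0 p : (0 <= k p)%E by rewrite lee_fin mulr_ge0 ?conv_kernel_ge0.
transitivity (\int[mu]_th \int[mu]_t k (th, t))%E.
  rewrite integral_mkcond; apply: eq_integral => th _.
  under [RHS]eq_integral do rewrite /k /= EFinM.
  rewrite ge0_integralZl_EFin //; last first.
  - apply/measurable_EFinP.
    exact: measurable_fun_pair2 measurable_conv_kernel.
  - by move=> t _; rewrite lee_fin conv_kernel_ge0.
  by rewrite -circ_econvE !patchE; case: ifPn => // _; rewrite mul0e.
rewrite (fubini_tonelli (m1 := mu) (m2 := mu) _ mk k0) [RHS]integral_mkcond.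
apply: eq_integral => t _; rewrite integral_conv_kernel_section.
by rewrite !patchE; case: ifPn => // _; rewrite mul0e.
Qed.

End periodic_test_function.

Lemma integral_circ_econv1 : (\int[mu]_(th in D) circ_econv th = 1)%E.
Proof.
have := integral_circ_econv (measurable_cst (1 : R)) (fun=> ler01) (fun=> erefl).
under eq_integral do rewrite mul1e.
move=> ->; rewrite -(integral_angle_density hf1); apply: eq_integral => t _.
under eq_integral do rewrite mul1r.
by rewrite integral_angle_density // mule1.
Qed.

Lemma integrable_circ_econv : mu.-integrable D circ_econv.
Proof.
apply/integrableP; split; first exact: measurable_funTS measurable_circ_econv.
have -> : (\int[mu]_(x in D) `|circ_econv x| = \int[mu]_(x in D) circ_econv x)%E.
  by apply: eq_integral => x _; rewrite gee0_abs // circ_econv_ge0.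
by rewrite integral_circ_econv1 ltry.
Qed.

Lemma angle_expect_circ_conv (h : R -> R) (B : R) :
  measurable_fun setT h -> (forall x, 0 <= h x <= B) ->
  (forall x, h (x + 2 * pi) = h x) ->
  angle_expect (circ_conv f1 f2) h =
  angle_expect f1 (fun t => angle_expect f2 (fun s => h (s + t))).
Proof.
move=> mh hB hper.
have h0 x : 0 <= h x by case/andP: (hB x).
have inner t : (angle_expect f2 (fun s => h (s + t)))%:E =
    (\int[mu]_(s in D) (h (s + t) * f2 s)%:E)%E.
  rewrite /angle_expect /Rintegral fineK //.
  apply: (integrable_fin_num (mu := mu) measurable_angle_dom).
  apply: (angle_density_integrableMl hf2 (B := B)) => [|s].
    by apply: measurable_funTS; apply: measurableT_comp mh _; exact: measurable_funD.
  by rewrite ger0_norm //; case/andP: (hB (s + t)).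
rewrite /angle_expect /Rintegral; congr fine.
transitivity (\int[mu]_(th in D) ((h th)%:E * circ_econv th))%E.
  apply: (ae_eq_integral (mu := mu)); first exact: measurable_angle_dom.
  - apply/measurable_EFinP; apply: measurable_funM; first exact: measurable_funTS.
    apply: measurable_funTS; apply: measurableT_comp measurable_circ_econv.
    exact: fine_measurable.
  - apply: emeasurable_funM; last exact: measurable_funTS measurable_circ_econv.
    by apply/measurable_EFinP; exact: measurable_funTS.
  (* [circ_conv f1 f2] is [fine \o circ_econv], which is wrong only where
     [circ_econv] is infinite, a null set. *)
  apply: filterS (integrable_ae (mu := mu) measurable_angle_dom integrable_circ_econv).
  by move=> th fin Dth; rewrite EFinM /circ_conv /Rintegral fineK //; exact: fin.
rewrite integral_circ_econv //; apply: eq_integral => t _.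
by rewrite EFinM inner muleC.
Qed.

End circ_conv.

Theorem theorem3p7 (R : realType) (f1 f2 : R -> R) :
  is_angle_density f1 -> is_angle_density f2 ->
  centered_at_P f1 -> centered_at_P f2 ->
  circ_variance (circ_conv f1 f2) = circ_variance f1 + circ_variance f2 - circ_variance f1 * circ_variance f2 / 2.
Proof.
(* Only [f2] needs to be centred, since E[sin Θ1] is multiplied by E[sin Θ2]. *)
move=> hf1 hf2 _ c2.
have mV : measurable_fun setT (fun x : R => 2 - 2 * cos x).
  apply: measurable_funB => //; apply: measurable_funM => //.
  exact: continuous_measurable_fun (@continuous_cos R).
have V_bound (x : R) : 0 <= 2 - 2 * cos x <= 4.
  by have := cos_max x; rewrite ler_norml => /andP[? ?]; apply/andP; split; lra.
have V_per (x : R) : 2 - 2 * cos (x + 2 * pi) = 2 - 2 * cos x.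
  by rewrite (mulr_natl pi 2) cosD2pi.
rewrite (circ_variance_cos hf1) (circ_variance_cos hf2).
rewrite /circ_variance (angle_expect_circ_conv hf1 hf2 mV V_bound V_per).
transitivity (angle_expect f1
  (fun t => 2 + (- 2 * angle_expect f2 cos) * cos t + 0 * sin t)).
  apply: eq_Rintegral => t _; congr (_ * _).
  by rewrite angle_expect_variance_shift // (c2 : angle_expect f2 sin = 0); ring.
by rewrite angle_expect_trig //; field.
Qed.
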